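(* Let $G$ be an edge-colored graph of order $n$ such that $\delta^c(G)=n-1$ (so $G$ is complete and any two edges sharing a vertex have distinct colors). Then for any subset $S\subseteq V(G)$ with $|S|=5$, $G[S]$ contains a rainbow $C_4$.
   Context: An edge-colored graph is a finite simple graph $G$ with a map $C:E(G)\to\mathbb{N}$. The color degree $d^c(v)$ is the number of distinct colors on edges incident to $v$; $\delta^c(G)=\min_v d^c(v)$. A subgraph is rainbow if all its edges have distinct colors; $C_4$ is a cycle of length 4; $G[S]$ is the induced subgraph. *)

From mathcomp Require Import all_boot.
Set Implicit Arguments. Unset Strict Implicit. Unset Printing Implicit Defensive.

Definition simple_graph (T : finType) (e : rel T) : Prop :=
  irreflexive e /\ symmetric e.

(* An edge-colouring: a colour for every unordered pair, i.e. a symmetric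
   map; only its values on edges (e x y) are relevant. *)
Definition edge_coloring (T : finType) (col : T -> T -> nat) : Prop :=
  forall x y, col x y = col y x.

Definition color_degree (T : finType) (e : rel T) (col : T -> T -> nat) (v : T) : nat :=
  size (undup [seq col v u | u <- enum T & e v u]).

Definition has_rainbow_C4_in (T : finType) (e : rel T) (col : T -> T -> nat)
    (S : {set T}) : Prop :=
  exists a b c d : T,
    [/\ [/\ a \in S, b \in S, c \in S & d \in S],
        uniq [:: a; b; c; d],
        [/\ e a b, e b c, e c d & e d a] &
        uniq [:: col a b; col b c; col c d; col d a]].

From mathcomp Require Import all_boot zify.
Set Implicit Arguments.
Unset Strict Implicit.
Unset Printing Implicit Defensive.

(* On four vertices a 4-cycle is the
   union of two of the three perfect matchings, and since adjacent edges
   already have distinct colours it is rainbow as soon as neither matching is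
   monochromatic.  So if G[S] has no rainbow C4, each of the five 4-subsets
   of S spans at least two monochromatic matchings: at least ten
   monochromatic pairs of disjoint edges.  But the three edges disjoint from
   a given edge form a triangle, whose colours are distinct, so every edge
   lies in at most one such pair and there are at most 10 / 2 = 5 of them. *)

Lemma color_degreeE (T : finType) (e : rel T) (col : T -> T -> nat) v :
  color_degree e col v = size (undup (image (col v) (e v))).
Proof. by rewrite /color_degree enumT. Qed.

Section MaxColorDegree.

Variables (T : finType) (e : rel T) (col : T -> T -> nat).
Hypotheses (e_irr : irreflexive e) (dc_max : forall v, color_degree e col v = #|T| - 1).

Lemma nbrs_sub_predC1 v : e v \subset predC1 v.
Proof.
by apply/subsetP => u; rewrite !inE; apply: contraTneq => ->; rewrite unfold_in e_irr.
Qed.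

Lemma max_color_degree_nbrs v : #|e v| = #|predC1 v| /\ uniq (image (col v) (e v)).
Proof.
have le_nbrs := subset_leq_card (nbrs_sub_predC1 v).
have := size_undup (image (col v) (e v)).
rewrite -color_degreeE dc_max size_image cardC1 -subn1 in le_nbrs * => ge_nbrs.
have card_nbrs : #|e v| = #|T| - 1 by apply/eqP; rewrite eqn_leq le_nbrs ge_nbrs.
split; first by rewrite card_nbrs.
by apply/negPn; rewrite -ltn_size_undup -color_degreeE dc_max size_image card_nbrs ltnn.
Qed.

Lemma max_color_degree_complete x y : x != y -> e x y.
Proof.
have [card_nbrs _] := max_color_degree_nbrs x.
move/(subset_cardP card_nbrs): (nbrs_sub_predC1 x) => nbrsE xy.
by have := nbrsE y; rewrite !inE eq_sym xy unfold_in.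
Qed.

Lemma max_color_degree_proper v : {in predC1 v &, injective (col v)}.
Proof.
have [_ /dinjectiveP col_inj] := max_color_degree_nbrs v.
by move=> x y xv yv; apply: col_inj; apply: max_color_degree_complete; rewrite eq_sym.
Qed.

End MaxColorDegree.

Section RainbowC4.

Variables (T : finType) (e : rel T) (col : T -> T -> nat).
Hypotheses (col_sym : edge_coloring col) (e_complete : forall x y, x != y -> e x y).
Hypothesis col_inj : forall v, {in predC1 v &, injective (col v)}.

Lemma col_neq v x y : x != v -> y != v -> x != y -> col v x != col v y.
Proof. by move=> xv yv; apply: contra_neq; apply: col_inj. Qed.

Lemma triangle_colors_uniq r s t :
  uniq [:: r; s; t] -> uniq [:: col r s; col r t; col s t].
Proof.
rewrite /= !inE !negb_or !andbT => /andP [/andP [rs rt] st].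
apply/andP; split; first (apply/andP; split).
- by rewrite col_neq // eq_sym.
- by rewrite (col_sym r s) col_neq // eq_sym.
- by rewrite (col_sym r t) (col_sym s t) col_neq.
Qed.

Definition monochromatic (x y z w : T) : nat := col x y == col z w.

Lemma monochromaticC x y z w : monochromatic x y z w = monochromatic z w x y.
Proof. by rewrite /monochromatic eq_sym. Qed.

Lemma monochromatic_triangle x y r s t : uniq [:: r; s; t] ->
  monochromatic x y r s + monochromatic x y r t + monochromatic x y s t <= 1.
Proof.
move=> /triangle_colors_uniq /(count_uniq_mem (col x y)) /=.
by rewrite addn0 addnA ![_ == col x y]eq_sym => ->; apply: leq_b1.
Qed.

Lemma rainbow_C4_of_opposite_colors (S : {set T}) a b c d :
  [/\ a \in S, b \in S, c \in S & d \in S] -> uniq [:: a; b; c; d] ->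
  col a b != col c d -> col b c != col d a -> has_rainbow_C4_in e col S.
Proof.
move=> abcdS uniq_abcd ab_cd bc_da.
move: (uniq_abcd); rewrite /= !inE !negb_or !andbT.
case/and3P => /and3P [ab ac ad] /andP [bc bd] cd.
have adj x v y : x != v -> y != v -> x != y -> col x v != col v y.
  by move=> xv yv xy; rewrite col_sym col_neq.
exists a, b, c, d; split => //; first by rewrite !e_complete // eq_sym.
rewrite /= !inE !negb_or ab_cd bc_da (eq_sym (col a b) (col d a)) !adj //.
all: by rewrite eq_sym.
Qed.

Lemma rainbow_C4_or_two_monochromatic (S : {set T}) i j k l :
  [/\ i \in S, j \in S, k \in S & l \in S] -> uniq [:: i; j; k; l] ->
  has_rainbow_C4_in e col S \/
  2 <= monochromatic i j k l + monochromatic i k j l + monochromatic i l j k.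
Proof.
move=> [iS jS kS lS] uniq_ijkl; rewrite /monochromatic.
have uniq_ijlk : uniq [:: i; j; l; k].
  by rewrite (perm_uniq (_ : perm_eq _ [:: i; j; k; l])) //; apply/permP => p /=; lia.
have uniq_ikjl : uniq [:: i; k; j; l].
  by rewrite (perm_uniq (_ : perm_eq _ [:: i; j; k; l])) //; apply/permP => p /=; lia.
case: eqVneq => [_|ij_kl]; case: eqVneq => [_|ik_jl]; case: eqVneq => [_|il_jk];
  try by right.
- left; apply: (@rainbow_C4_of_opposite_colors S i k j l) => //.
  by rewrite (col_sym k j) (col_sym l i) eq_sym.
- left; apply: (@rainbow_C4_of_opposite_colors S i j k l) => //.
  by rewrite (col_sym l i) eq_sym.
- left; apply: (@rainbow_C4_of_opposite_colors S i j l k) => //.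
    by rewrite (col_sym l k).
  by rewrite (col_sym k i) eq_sym.
- left; apply: (@rainbow_C4_of_opposite_colors S i j k l) => //.
  by rewrite (col_sym l i) eq_sym.
Qed.

Lemma rainbow_C4_of_five (S : {set T}) a b c d f :
  [/\ a \in S, b \in S, c \in S, d \in S & f \in S] -> uniq [:: a; b; c; d; f] ->
  has_rainbow_C4_in e col S.
Proof.
move=> [aS bS cS dS fS] /mask_uniq uniq_mask.
have [//|Qabcd] := rainbow_C4_or_two_monochromatic (And4 aS bS cS dS)
  (uniq_mask [:: true; true; true; true; false]).
have [//|Qabcf] := rainbow_C4_or_two_monochromatic (And4 aS bS cS fS)
  (uniq_mask [:: true; true; true; false; true]).
have [//|Qabdf] := rainbow_C4_or_two_monochromatic (And4 aS bS dS fS)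
  (uniq_mask [:: true; true; false; true; true]).
have [//|Qacdf] := rainbow_C4_or_two_monochromatic (And4 aS cS dS fS)
  (uniq_mask [:: true; false; true; true; true]).
have [//|Qbcdf] := rainbow_C4_or_two_monochromatic (And4 bS cS dS fS)
  (uniq_mask [:: false; true; true; true; true]).
have Eab := monochromatic_triangle a b (uniq_mask [:: false; false; true; true; true]).
have Eac := monochromatic_triangle a c (uniq_mask [:: false; true; false; true; true]).
have Ead := monochromatic_triangle a d (uniq_mask [:: false; true; true; false; true]).
have Eaf := monochromatic_triangle a f (uniq_mask [:: false; true; true; true; false]).
have Ebc := monochromatic_triangle b c (uniq_mask [:: true; false; false; true; true]).
have Ebd := monochromatic_triangle b d (uniq_mask [:: true; false; true; false; true]).
have Ebf := monochromatic_triangle b f (uniq_mask [:: true; false; true; true; false]).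
have Ecd := monochromatic_triangle c d (uniq_mask [:: true; true; false; false; true]).
have Ecf := monochromatic_triangle c f (uniq_mask [:: true; true; false; true; false]).
have Edf := monochromatic_triangle d f (uniq_mask [:: true; true; true; false; false]).
(* Orient each pair of disjoint edges as in the Q facts, lexicographically. *)
rewrite (monochromaticC b c) (monochromaticC b c a f) in Ebc.
rewrite (monochromaticC b d) (monochromaticC b d a f) in Ebd.
rewrite (monochromaticC b f) (monochromaticC b f a d) in Ebf.
rewrite !(monochromaticC c d) in Ecd; rewrite !(monochromaticC c f) in Ecf.
rewrite !(monochromaticC d f) in Edf.
lia.
Qed.

End RainbowC4.

Theorem lemma10 (T : finType) (e : rel T) (col : T -> T -> nat) :
  simple_graph e -> edge_coloring col ->
  (forall v : T, color_degree e col v = #|T| - 1) ->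
  forall S : {set T}, #|S| = 5 -> has_rainbow_C4_in e col S.
Proof.
move=> [e_irr _] col_sym dc_max S card_S.
have e_complete := max_color_degree_complete e_irr dc_max.
have col_inj := max_color_degree_proper e_irr dc_max.
have : size (enum S) = 5 by rewrite -cardE.
move: (enum_uniq S) (mem_enum S).
case: (enum S) => [|a [|b [|c [|d [|f [|]]]]]] // uniq_S memS _.
apply: (rainbow_C4_of_five col_sym e_complete col_inj _ uniq_S).
by split; rewrite -memS !inE eqxx ?orbT.
Qed.
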